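(* Let $n\ge1$, let $U_1,\dots,U_n$ be independent Uniform$[0,1]$ random variables, and let $N_t=|\{i:U_i\le t\}|$ for $t\in[0,1]$. Let $t_0=n^{-1/2}$. Then for every $x>1$, $$\mathbb P\left[\sup_{t\in[0,t_0]}\frac{N_t}{1+nt}\ge x\right]\le\exp\!\left(n^{-1/2}+\tfrac12 n^{-1}\right)\exp(-\gamma_x x),$$ where $\gamma_x$ is the positive root $\gamma$ of $e^{\gamma}=1+\gamma x$. *)

From HB Require Import structures.
From mathcomp Require Import all_boot all_order all_algebra.
From mathcomp Require Import all_classical all_reals all_analysis.
Set Implicit Arguments. Unset Strict Implicit. Unset Printing Implicit Defensive.
Import Order.TTheory GRing.Theory Num.Theory.
Local Open Scope classical_set_scope.
Local Open Scope ring_scope.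

Definition mutually_independent d (T : measurableType d) (R : realType)
    (P : probability T R) (n : nat) (U : 'I_n -> T -> R) : Prop :=
  forall B : 'I_n -> set R, (forall i, measurable (B i)) ->
    P (\bigcap_(i in [set: 'I_n]) (U i @^-1` B i)) =
    (\prod_(i < n) P (U i @^-1` B i))%E.

Definition uniform01 d (T : measurableType d) (R : realType)
    (P : probability T R) (X : T -> R) : Prop :=
  measurable_fun setT X /\
  forall A : set R, measurable A -> P (X @^-1` A) = uniform_prob (@ltr01 R) A.

Definition countN (R : realType) (n : nat) (T : Type) (U : 'I_n -> T -> R)
    (t : R) (w : T) : nat := #|[set i : 'I_n | U i w <= t]|.

From HB Require Import structures.
From mathcomp Require Import all_boot all_order all_algebra.
From mathcomp Require Import all_classical all_reals all_analysis.
From mathcomp Require Import ring lra zify.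
Set Implicit Arguments. Unset Strict Implicit. Unset Printing Implicit Defensive.
Import Order.TTheory GRing.Theory Num.Theory.
Local Open Scope classical_set_scope.
Local Open Scope ring_scope.

(* For [y < x], the ratio [N_t / (1 + n t)] exceeds [y] on [[0, t0]] iff for
   some level [i] the count reaches [i] by the time [s_i] with
   [i = y (1 + n s_i)].  This event only depends on the multinomial counts of
   the [U_j] in the cells cut out by the [s_i].  Walking through the cells, the
   binomial law of each count is dominated by a Poisson law of rate [n], at the
   global price [exp (t0 + 1 / (2 n))].  For the Poisson process,
   [exp (gamma N_t - gamma x n t)] is a martingale (as [e^gamma = 1 + gamma x]),
   which at a crossing is at least [exp (- gamma n (x - y) / y)]; stopping it
   there bounds the probability by
   [exp (t0 + 1 / (2 n)) exp (- gamma x + gamma n (x - y) / y)], and [y -> x]. *)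

Definition counts n M (c : {ffun 'I_n -> 'I_M}) : seq nat :=
  mkseq (fun v => \sum_(j < n) (c j == v :> nat))%N M.

Lemma counts_lift n M (c : {ffun 'I_n.+1 -> 'I_M}) :
  counts c = incr_nth (counts [ffun j : 'I_n => c (lift ord0 j)]) (c ord0).
Proof.
apply: (@eq_from_nth _ 0%N).
  by rewrite size_incr_nth /counts !size_mkseq ltn_ord.
move=> v; rewrite /counts size_mkseq => hv.
rewrite nth_incr_nth !nth_mkseq // big_ord_recl eq_sym; congr (_ + _)%N.
by apply: eq_bigr => j _; rewrite ffunE.
Qed.

Section Multinomial.
Variable R : comPzRingType.
Implicit Types (ps : seq R) (g : seq nat -> R).

(* [multinomial_sum m ps g] and [assignment_sum ps m g] are the expectation of
   [g] applied to the cell counts of [m] points thrown independently into cells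
   of probabilities [ps], computed cell by cell and point by point. *)
Fixpoint multinomial_sum (m : nat) ps g : R :=
  match ps with
  | [::] => (m == 0)%:R * g [::]
  | p :: ps' => \sum_(l < m.+1)
      'C(m, l)%:R * p ^+ l * multinomial_sum (m - l) ps' (fun ls => g ((l : nat) :: ls))
  end.

Lemma eq_multinomial_sum m ps g g' :
  g =1 g' -> multinomial_sum m ps g = multinomial_sum m ps g'.
Proof.
elim: ps m g g' => [|p ps IH] m g g' /= eq_g; first by rewrite eq_g.
by apply: eq_bigr => l _; rewrite (IH _ _ (fun ls => g' ((l : nat) :: ls))).
Qed.

Lemma multinomial_sum_cst m ps c :
  multinomial_sum m ps (fun=> c) = c * (\sum_(p <- ps) p) ^+ m.
Proof.
elim: ps m => [|p ps IH] m /=.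
  by rewrite big_nil; case: m => [|m]; rewrite ?mul1r ?mulr1 // expr0n mul0r mulr0.
rewrite big_cons addrC exprDn mulr_sumr; apply: eq_bigr => l _.
by rewrite IH -mulr_natl; ring.
Qed.

Lemma multinomial_sum0 ps g : multinomial_sum 0 ps g = g (nseq (size ps) 0).
Proof.
elim: ps g => [|p ps IH] g /=; first by rewrite mul1r.
by rewrite big_ord1 bin0 expr0 !mul1r subn0 IH.
Qed.

Lemma multinomial_sumS m ps g :
  multinomial_sum m.+1 ps g =
  \sum_(v < size ps) ps`_v * multinomial_sum m ps (fun l => g (incr_nth l v)).
Proof.
elim: ps m g => [|p ps IH] m g /=; first by rewrite big_ord0 mul0r.
rewrite [RHS]big_ord_recl /=.
have -> : \sum_(v < size ps) ps`_v * (\sum_(l < m.+1) 'C(m, l)%:R * p ^+ l *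
      multinomial_sum (m - l) ps (fun ls => g ((l : nat) :: incr_nth ls v))) =
    \sum_(l < m.+1) 'C(m, l)%:R * p ^+ l *
      multinomial_sum (m - l).+1 ps (fun ls => g ((l : nat) :: ls)).
  under eq_bigr => v _ do rewrite mulr_sumr.
  rewrite exchange_big /=; apply: eq_bigr => l _.
  by rewrite IH mulr_sumr; apply: eq_bigr => v _; rewrite mulrCA.
rewrite [LHS]big_ord_recl /=.
rewrite (eq_bigr (fun i : 'I_m.+1 =>
    'C(m, i.+1)%:R * p ^+ i.+1 * multinomial_sum (m - i) ps (fun ls => g (i.+1 :: ls)) +
    p * ('C(m, i)%:R * p ^+ i * multinomial_sum (m - i) ps (fun ls => g (i.+1 :: ls)))));
  last by move=> i _; rewrite /bump /= add1n subSS binS natrD exprS; ring.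
rewrite big_split /= -mulr_sumr addrA addrC; congr (_ + _).
rewrite big_ord_recr /= (bin_small (ltnSn m)) !mul0r addr0 [RHS]big_ord_recl !bin0 !subn0.
by congr (_ + _); apply: eq_bigr => i _; rewrite lift0 subnSK.
Qed.

Definition assignment_sum ps n g : R :=
  \sum_(c : {ffun 'I_n -> 'I_(size ps)}) g (counts c) * \prod_(j < n) ps`_(c j).

Lemma assignment_sum0 ps g : assignment_sum ps 0 g = g (nseq (size ps) 0).
Proof.
rewrite /assignment_sum (big_pred1 (ffun0 (card_ord 0))) => [|c]; last first.
  by apply/esym/eqP/ffunP => -[].
rewrite big_ord0 mulr1 /counts; congr g; apply: (@eq_from_nth _ 0%N).
  by rewrite size_mkseq size_nseq.
by move=> v; rewrite size_mkseq => hv; rewrite nth_mkseq // big_ord0 nth_nseq hv.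
Qed.

Lemma assignment_sumS ps n g :
  assignment_sum ps n.+1 g =
  \sum_(v < size ps) ps`_v * assignment_sum ps n (fun l => g (incr_nth l v)).
Proof.
rewrite /assignment_sum.
pose cons_ff (vc : 'I_(size ps) * {ffun 'I_n -> 'I_(size ps)}) :
    {ffun 'I_n.+1 -> 'I_(size ps)} :=
  [ffun j => if unlift ord0 j is Some j' then vc.2 j' else vc.1].
pose uncons_ff (c : {ffun 'I_n.+1 -> 'I_(size ps)}) :=
  (c ord0, [ffun j : 'I_n => c (lift ord0 j)]).
have consK : cancel cons_ff uncons_ff.
  move=> [v c]; rewrite /cons_ff /uncons_ff /= ffunE unlift_none; congr pair.
  by apply/ffunP => j; rewrite !ffunE liftK.
have unconsK : cancel uncons_ff cons_ff.
  move=> c; apply/ffunP => j; rewrite ffunE /=.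
  by case: unliftP => [j' ->|->]; rewrite ?ffunE.
rewrite (reindex cons_ff); last by exists uncons_ff => c _; [exact: consK | exact: unconsK].
rewrite -(pair_big xpredT xpredT (fun v c =>
  g (counts (cons_ff (v, c))) * \prod_(j < n.+1) ps`_(cons_ff (v, c) j))) /=.
apply: eq_bigr => v _; rewrite mulr_sumr; apply: eq_bigr => c _.
rewrite counts_lift big_ord_recl !ffunE unlift_none /=.
have -> : [ffun j => cons_ff (v, c) (lift ord0 j)] = c.
  by apply/ffunP => j; rewrite !ffunE liftK.
under eq_bigr => j _ do rewrite ffunE liftK.
by rewrite mulrCA.
Qed.

Lemma assignment_sumE ps n g : assignment_sum ps n g = multinomial_sum n ps g.
Proof.
elim: n g => [|n IH] g; first by rewrite assignment_sum0 multinomial_sum0.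
by rewrite assignment_sumS multinomial_sumS; apply: eq_bigr => v _; rewrite IH.
Qed.

End Multinomial.

Fixpoint crossing (N : nat) (bs l : seq nat) : bool :=
  match bs, l with
  | b :: bs', k :: l' => (b <= N + k)%N || crossing (N + k) bs' l'
  | _, _ => false
  end.

Lemma crossingP N bs l : (size bs <= size l)%N ->
  reflect (exists2 i, (i < size bs)%N & nth 0 bs i <= N + \sum_(j < i.+1) nth 0 l j)%N
          (crossing N bs l).
Proof.
elim: bs N l => [|b bs IH] N l; first by move=> _; apply: ReflectF => -[].
case: l => [|k l] //= size_le; apply: (iffP orP).
  case=> [cross0|/IH[//|i ib cross_i]]; first by exists 0%N; rewrite ?big_ord1.
  by exists i.+1; rewrite // big_ord_recl /= addnA.
case=> -[|i] /= ib; first by rewrite big_ord1; left.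
by rewrite big_ord_recl /= addnA => cross_i; right; apply/IH => //; exists i.
Qed.

Lemma counts_prefix n M (c : {ffun 'I_n -> 'I_M}) v : (v < M)%N ->
  (\sum_(j < v.+1) nth 0 (counts c) j = \sum_(i < n) (c i <= v))%N.
Proof.
move=> vM; rewrite /counts.
rewrite (eq_bigr (fun j : 'I_v.+1 => \sum_(i < n) (c i == j :> nat))%N); last first.
  by move=> j _; rewrite nth_mkseq // (leq_ltn_trans _ vM) // -ltnS.
rewrite exchange_big /=; apply: eq_bigr => i _.
rewrite -ltnS -(big_mkord xpredT (fun j => (c i == j :> nat) : nat)).
elim: v.+1 => [|K IHK]; first by rewrite big_geq // ltn0.
by rewrite big_nat_recr //= IHK ltnS (leq_eqVlt (c i)); case: ltngtP.
Qed.

Lemma exp_partial_sum_le (R : realType) (y : R) K : 0 <= y ->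
  \sum_(l < K) y ^+ l / l`!%:R <= expR y.
Proof.
move=> y0; rewrite /expR.
have -> : \sum_(l < K) y ^+ l / l`!%:R = series (exp_coeff y) K.
  by rewrite /series /= big_mkord.
apply: nondecreasing_cvgn_le; last exact: is_cvg_series_exp_coeff.
apply: (@nondecreasing_series _ _ xpredT) => k _ _ /=.
by rewrite /exp_coeff /= divr_ge0 // exprn_ge0.
Qed.

Lemma poisson_mass_le1 (R : realType) (c : R) K : 0 <= c ->
  \sum_(l < K) c ^+ l / l`!%:R * expR (- c) <= 1.
Proof.
move=> c0; rewrite -mulr_suml.
apply: le_trans (ler_wpM2r (expR_ge0 (- c)) (exp_partial_sum_le K c0)) _.
by rewrite -expRD subrr expR0.
Qed.

Lemma ffactnD n N l : (n ^_ (N + l) = n ^_ N * (n - N) ^_ l)%N.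
Proof.
elim: l => [|l IH]; first by rewrite addn0 ffactn0 muln1.
by rewrite addnS !ffactnSr IH subnDA mulnA.
Qed.

Lemma onem_le_expR (R : realType) (r : R) : 0 <= r <= 1 ->
  1 - r <= expR (- (r + 2^-1 * r ^+ 2)).
Proof.
move=> /andP[r0 r1].
pose f u : R := (1 - u) * expR (u + 2^-1 * u ^+ 2).
have f' (u : R) : is_derive u 1 f (- (u ^+ 2) * expR (u + 2^-1 * u ^+ 2)).
  apply: (is_derive_eq (is_deriveM
    (is_deriveB (is_derive_cst (1 : R) u 1) (is_derive_id u 1))
    (is_derive1_comp (is_derive_expR _) (is_deriveD (is_derive_id u 1)
      (is_deriveZ 2^-1 (is_deriveX 2 (is_derive_id u (1 : R)))))))).
  rewrite -[LHS]/((1 - u) * (expR (u + 2^-1 * u ^+ 2) * (1 + 2^-1 * (2 * u ^+ 1 * 1))) +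
    expR (u + 2^-1 * u ^+ 2) * (0 - 1)).
  by rewrite expr1 mulr1; field.
have : f r <= f 0.
  apply: (@ler0_derive1_nincr R f 0 1) => //.
  - move=> u _; rewrite derive1E (@derive_val _ _ _ _ _ _ _ (f' u)).
    by rewrite mulr_le0_ge0 ?expR_ge0 // oppr_le0 sqr_ge0.
  - by apply: derivable_within_continuous => u _; have [] := f' u.
rewrite /f subr0 mul1r expr0n /= mulr0 addr0 expR0 expRN.
by move=> h; rewrite -[_^-1]mul1r ler_pdivlMr ?expR_gt0.
Qed.

Lemma ffact_le_expR (R : realType) n N : (0 < n)%N ->
  (n ^_ N)%:R <= n%:R ^+ N * expR (- (N%:R * (N%:R - 1) / (2 * n%:R))) :> R.
Proof.
move=> n0; have nR : 0 < n%:R :> R by rewrite ltr0n.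
elim: N => [|N IH]; first by rewrite ffactn0 !mul0r oppr0 expR0 mulr1.
have step : (n - N)%:R <= n%:R * expR (- (N%:R / n%:R)) :> R.
  have [Nn|nN] := leqP N n; last by rewrite (eqnP (ltnW nN)) mulr_ge0 ?expR_ge0 ?ltW.
  rewrite natrB // -[X in X - _](mulr1 n%:R) -[X in _ - X](mulfVK (lt0r_neq0 nR)).
  rewrite [_ / _ * _]mulrC -mulrBr; apply: ler_wpM2l; first exact: ltW.
  exact: expR_ge1Dx.
rewrite ffactnSr natrM; apply: le_trans (ler_pM (ler0n _ _) (ler0n _ _) IH step) _.
rewrite exprSr mulrACA -expRD le_eqVlt; apply/orP; left; apply/eqP; congr (_ * expR _).
by rewrite -natr1; field; rewrite lt0r_neq0.
Qed.

(* Completing the square in [k]: 2m times the difference is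
   (k - m r - (1 + m r^2)/2)^2 + (1 - (1 + m r^2)^2/4) + m (2t - r (1 + m r^2)),
   and [m r^2 <= m t^2 = 1] makes each term nonnegative. *)
Lemma poissonization_exponent_le (R : realFieldType) (m k r t : R) :
  0 < m -> 0 <= r <= t -> t ^+ 2 * m = 1 ->
  (k - m) * (r + 2^-1 * r ^+ 2) <= t + 2^-1 * m^-1 + (k * (k - 1) / (2 * m) - m * r).
Proof.
move=> m0 /andP[r0 rt] tm.
have u0 : 0 <= m * r ^+ 2 by rewrite mulr_ge0 ?sqr_ge0 ?ltW.
have u1 : m * r ^+ 2 <= 1.
  rewrite -tm [m * _]mulrC; apply: ler_wpM2r; first exact: ltW.
  by rewrite ler_sqr //; apply: le_trans rt.
rewrite -subr_ge0.
have -> : t + 2^-1 * m^-1 + (k * (k - 1) / (2 * m) - m * r) - (k - m) * (r + 2^-1 * r ^+ 2) =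
    ((k - m * r - (1 + m * r ^+ 2) / 2) ^+ 2 + (1 - m * r ^+ 2) * (3 + m * r ^+ 2) / 4
     + m * (2 * t - r * (1 + m * r ^+ 2))) / (2 * m).
  by field; rewrite lt0r_neq0.
apply: divr_ge0; last by rewrite mulr_ge0 ?ltW.
rewrite addr_ge0 // ?addr_ge0 ?sqr_ge0 // ?divr_ge0 ?mulr_ge0 ?subr_ge0 ?addr_ge0 ?(ltW m0) //.
have ru : r * (m * r ^+ 2) <= r by rewrite -[leRHS]mulr1 ler_wpM2l.
rewrite mulrDr mulr1; lra.
Qed.

Lemma invr_sqrt_nat_le1 (R : realType) n : (0 < n)%N -> (Num.sqrt n%:R)^-1 <= 1 :> R.
Proof.
move=> n_gt0; rewrite invf_le1 ?sqrtr_gt0 ?ltr0n // -[leLHS]sqrtr1.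
by rewrite ler_sqrt ?ler1n.
Qed.

Section PoissonWeight.
Variables (R : realType) (n : nat).

(* [(1 - r) ^+ (n - N) / poisson_weight N r] is the ratio of the probabilities
   of the value [N] under Binomial(n, r) and under Poisson(n r). *)
Definition poisson_weight (N : nat) (r : R) : R :=
  n%:R ^+ N / (n ^_ N)%:R * expR (- (n%:R * r)).

Lemma poisson_weight_ge0 N r : 0 <= poisson_weight N r.
Proof. by rewrite mulr_ge0 ?expR_ge0 // divr_ge0 ?exprn_ge0. Qed.

Lemma binomial_le_poisson_weight N r : (0 < n)%N -> (N <= n)%N ->
  0 <= r <= (Num.sqrt n%:R)^-1 ->
  (1 - r) ^+ (n - N) <= expR ((Num.sqrt n%:R)^-1 + 2^-1 * n%:R^-1) * poisson_weight N r.
Proof.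
move=> n0 Nn /andP[r0 rt]; set t := (Num.sqrt n%:R)^-1 in rt *.
have nR : 0 < n%:R :> R by rewrite ltr0n.
have tn : t ^+ 2 * n%:R = 1.
  by rewrite /t exprVn sqr_sqrtr ?ler0n // mulVf // lt0r_neq0.
have r1 : r <= 1 := le_trans rt (invr_sqrt_nat_le1 R n0).
pose q := N%:R * (N%:R - 1) / (2 * n%:R) : R.
have binom_le : (1 - r) ^+ (n - N) <= expR (- ((n - N)%:R * (r + 2^-1 * r ^+ 2))).
  rewrite -mulrN expRM_natl lerXn2r ?nnegrE ?subr_ge0 ?expR_ge0 //.
  by rewrite onem_le_expR // r0 r1.
have weight_ge : expR q * expR (- (n%:R * r)) <= poisson_weight N r.
  rewrite /poisson_weight ler_wpM2r ?expR_ge0 // ler_pdivlMr ?ltr0n ?ffact_gt0 //.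
  by rewrite -ler_pdivlMl ?expR_gt0 // mulrC -expRN ffact_le_expR.
apply: le_trans binom_le _; apply: le_trans (ler_wpM2l (expR_ge0 _) weight_ge).
rewrite -!expRD ler_expR natrB // -mulNr opprB.
by apply: poissonization_exponent_le; rewrite ?r0.
Qed.

End PoissonWeight.

Section Increments.
Variables (R : numDomainType) (e : nat -> R).

Definition increments k m : seq R := [seq e i.+1 - e i | i <- iota k m].

Lemma size_increments k m : size (increments k m) = m.
Proof. by rewrite size_map size_iota. Qed.

Lemma sum_increments k m : \sum_(p <- increments k m) p = e (k + m) - e k.
Proof. by rewrite big_map -telescope_sumr ?leq_addr // /index_iota addKn. Qed.

End Increments.

Section CrossingBound.
Variables (R : realType) (n : nat) (gamma x delta : R).
Hypothesis gamma_eq : expR gamma = 1 + gamma * x.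

(* Up to a constant factor [exp (gamma N_r - gamma x n r)], a martingale for a
   Poisson process [N] of rate [n] because [expR gamma - 1 = gamma x]. *)
Definition exp_martingale (N : nat) (r : R) : R :=
  expR (gamma * (N%:R - x * (1 + n%:R * r)) + delta).

Lemma poisson_weight_step N l r p : (N + l <= n)%N ->
  'C(n - N, l)%:R * p ^+ l *
    (poisson_weight n (N + l) (r + p) * exp_martingale (N + l) (r + p)) =
  poisson_weight n N r * exp_martingale N r *
    ((n%:R * p * expR gamma) ^+ l / l`!%:R * expR (- (n%:R * p * expR gamma))).
Proof.
move=> Nln; have Nn : (N <= n)%N := leq_trans (leq_addr l N) Nln.
have binE : 'C(n - N, l)%:R = ((n - N) ^_ l)%:R / l`!%:R :> R.
  by rewrite -bin_ffact natrM mulfK // pnatr_eq0 -lt0n fact_gt0.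
rewrite /poisson_weight /exp_martingale binE ffactnD natrM.
have -> : expR (- (n%:R * (r + p))) = expR (- (n%:R * r)) * expR (- (n%:R * p)) :> R.
  by rewrite -expRD; congr expR; ring.
have -> : expR (gamma * ((N + l)%:R - x * (1 + n%:R * (r + p))) + delta) =
    expR (gamma * (N%:R - x * (1 + n%:R * r)) + delta) * expR gamma ^+ l *
    expR (- (gamma * x * n%:R * p)) :> R.
  by rewrite -expRM_natl -!expRD; congr expR; rewrite natrD; ring.
have -> : expR (- (n%:R * p * expR gamma)) =
    expR (- (n%:R * p)) * expR (- (gamma * x * n%:R * p)) :> R.
  by rewrite -expRD gamma_eq; congr expR; ring.
have ffact_neq0 (m j : nat) : (j <= m)%N -> (m ^_ j)%:R != 0 :> R.
  by move=> jm; rewrite pnatr_eq0 -lt0n ffact_gt0.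
rewrite !exprMn exprD.
field; rewrite ?ffact_neq0 ?leq_subRL // ?pnatr_eq0 -?lt0n ?fact_gt0 //.
Qed.

Variables (t0 Rs : R) (e : nat -> R) (b : nat -> nat).
Hypotheses (Rs_ge0 : 0 <= Rs) (e_ge0 : forall i, 0 <= e i)
  (e_le : forall i, (i <= n)%N -> e i <= t0)
  (e_homo : {homo e : i j / (i <= j)%N >-> i <= j}) (e_last : e n.+1 = 1).
Hypothesis binomial_le : forall N r, (N <= n)%N -> 0 <= r <= t0 ->
  (1 - r) ^+ (n - N) <= Rs * poisson_weight n N r.
Hypothesis crossing_ge1 : forall i N, (0 < i <= n)%N -> (b i <= N <= n)%N ->
  1 <= exp_martingale N (e i).

Lemma crossing_sum_le m k N : (k + m)%N = n -> (N <= n)%N ->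
  multinomial_sum (n - N) (increments e k m.+1)
    (fun l => (crossing N [seq b i | i <- iota k.+1 m] l)%:R)
  <= Rs * poisson_weight n N (e k) * exp_martingale N (e k).
Proof.
have rhs_ge0 N' r : 0 <= Rs * poisson_weight n N' r * exp_martingale N' r.
  by rewrite !mulr_ge0 ?poisson_weight_ge0 ?expR_ge0.
elim: m k N => [|m IH] k N kmn Nn.
  rewrite (@eq_multinomial_sum _ _ _ _ (fun=> 0)) // multinomial_sum_cst mul0r.
  exact: rhs_ge0.
set p := e k.+1 - e k; set ps := increments e k.+1 m.+1.
have kn : (k < n)%N by rewrite -kmn addnS ltnS leq_addr.
have sum_ps : \sum_(q <- ps) q = 1 - e k.+1.
  by rewrite sum_increments addSn kmn e_last.
have term_le (l : 'I_(n - N).+1) :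
    multinomial_sum (n - N - l) ps
      (fun ls => (crossing N [seq b i | i <- iota k.+1 m.+1] ((l : nat) :: ls))%:R)
    <= Rs * (poisson_weight n (N + l) (e k.+1) * exp_martingale (N + l) (e k.+1)).
  have Nln : (N + l <= n)%N by have := ltn_ord l; lia.
  rewrite -subnDA (@eq_multinomial_sum _ _ _ _ (fun ls => ((b k.+1 <= N + l)%N ||
    crossing (N + l) [seq b i | i <- iota k.+2 m] ls)%:R)) //.
  case crossed: (b k.+1 <= N + l)%N; last by rewrite mulrA; apply: IH; rewrite // addSnnS.
  rewrite (@eq_multinomial_sum _ _ _ _ (fun=> 1)) // multinomial_sum_cst mul1r sum_ps.
  rewrite mulrA; apply: le_trans (binomial_le Nln _) _.
    by rewrite e_ge0 e_le.
  rewrite -[leLHS]mulr1 ler_wpM2l ?mulr_ge0 ?poisson_weight_ge0 //.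
  by apply: crossing_ge1; rewrite ?crossed ?kn.
have p_ge0 : 0 <= p by rewrite subr_ge0 e_homo.
have -> : multinomial_sum (n - N) (increments e k m.+2)
    (fun l => (crossing N [seq b i | i <- iota k.+1 m.+1] l)%:R) =
  \sum_(l < (n - N).+1) 'C(n - N, l)%:R * p ^+ l * multinomial_sum (n - N - l) ps
    (fun ls => (crossing N [seq b i | i <- iota k.+1 m.+1] ((l : nat) :: ls))%:R) by [].
apply: le_trans (ler_sum _ (fun l _ =>
  ler_wpM2l (mulr_ge0 (ler0n _ _) (exprn_ge0 _ p_ge0)) (term_le l))) _.
set c := n%:R * p * expR gamma.
have c_ge0 : 0 <= c by rewrite !mulr_ge0 ?ler0n ?expR_ge0.
have ekp : e k.+1 = e k + p by rewrite /p addrC subrK.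
rewrite (eq_bigr (fun l : 'I_(n - N).+1 => Rs * poisson_weight n N (e k) *
    exp_martingale N (e k) * (c ^+ l / l`!%:R * expR (- c)))); last first.
  move=> l _; rewrite mulrCA ekp poisson_weight_step; first by rewrite !mulrA.
  by have := ltn_ord l; lia.
by rewrite -mulr_sumr -[leRHS]mulr1 ler_wpM2l ?rhs_ge0 ?poisson_mass_le1.
Qed.

End CrossingBound.

Lemma uniform_prob01_le (R : realType) (c : R) : 0 <= c <= 1 ->
  uniform_prob (@ltr01 R) `]-oo, c] = c%:E.
Proof.
move=> /andP[c0 c1]; rewrite /uniform_prob integral_uniform_pdf.
have -> : `]-oo, c] `&` `[0, 1] = `[0, c]%classic :> set R.
  apply/seteqP; split => u /=; rewrite !in_itv /=.
    by move=> [uc /andP[u0 _]]; rewrite u0 uc.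
  by move=> /andP[u0 uc]; rewrite u0 uc (le_trans uc c1).
rewrite (eq_integral (fun=> 1%:E)); last first.
  move=> u; rewrite mem_setE in_itv /= => /andP[u0 uc].
  by rewrite /uniform_pdf u0 (le_trans uc c1) subr0 invr1.
rewrite integral_cst // mul1e /= lebesgue_measure_itv /= lte_fin.
by case: ltgtP c0 => // [c_gt0|<-] _; rewrite ?subrr // EFinN sube0.
Qed.

Lemma uniform01_cdf d (T : measurableType d) (R : realType) (P : probability T R)
    (X : T -> R) (c : R) :
  uniform01 P X -> 0 <= c <= 1 -> P (X @^-1` `]-oo, c]) = c%:E.
Proof. by move=> [_ PX] c01; rewrite PX // uniform_prob01_le. Qed.

Section CellIndex.
Variables (R : realType) (n : nat) (e : nat -> R).
Hypothesis e_homo : {homo e : i j / (i <= j)%N >-> i <= j}.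

Definition cell_index (u : R) : nat := count (fun i => e i.+1 < u) (iota 0 n).

Lemma cell_index_le_n u : (cell_index u <= n)%N.
Proof. by rewrite /cell_index (leq_trans (count_size _ _)) // size_iota. Qed.

Lemma cell_index_le u v : (v < n)%N -> (cell_index u <= v)%N = (u <= e v.+1).
Proof.
move=> vn; rewrite /cell_index; have [ue|eu] := leP u (e v.+1).
  rewrite -(subnKC (ltnW vn)) iotaD count_cat add0n.
  rewrite [count _ (iota v _)](@eq_in_count _ _ pred0).
    by rewrite count_pred0 addn0 (leq_trans (count_size _ _)) // size_iota.
  move=> i; rewrite mem_iota => /andP[vi _] /=; apply/negbTE; rewrite -leNgt.
  by apply: le_trans ue _; apply: e_homo.
rewrite -(subnKC vn) iotaD count_cat add0n (@eq_in_count _ _ predT (iota 0 v.+1)).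
  by rewrite count_predT size_iota ltnNge leq_addr.
move=> i; rewrite mem_iota add0n ltnS => /andP[_ iv] /=.
by apply: le_lt_trans eu; apply: e_homo.
Qed.

Hypotheses (e0 : e 0 = 0) (e_last : e n.+1 = 1).

Let cell_lt v := [set u | (cell_index u < v)%N].

Let cell_ltE v : cell_lt v =
  if v is v'.+1 then if (v' < n)%N then `]-oo, e v]%classic else setT else set0.
Proof.
case: v => [|v]; first by apply/seteqP; split.
case: ltnP => [vn|nv]; apply/seteqP; split=> u; rewrite /cell_lt /= ?in_itv /= ltnS //.
  by rewrite cell_index_le.
by rewrite cell_index_le.
by move=> _; apply: leq_trans nv; apply: cell_index_le_n.
Qed.

Let measurable_cell_lt v : measurable (cell_lt v).
Proof. by rewrite cell_ltE; case: v => [|v] //; case: ifP. Qed.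

Let prob_cell_lt d (T : measurableType d) (P : probability T R) (X : T -> R) v :
  uniform01 P X -> (v <= n.+1)%N -> P (X @^-1` cell_lt v) = (e v)%:E.
Proof.
move=> uX vn; rewrite cell_ltE; case: v vn => [_|v vn].
  by rewrite preimage_set0 measure0 e0.
case: ifPn => [{}vn|]; last first.
  rewrite -leqNgt => nv; have -> : v = n by apply/anti_leq; rewrite nv -ltnS vn.
  by rewrite preimage_setT probability_setT e_last.
by apply: uniform01_cdf => //; rewrite -e0 -e_last !e_homo // ltnW.
Qed.

Let cellE v : [set u | cell_index u = v] = cell_lt v.+1 `\` cell_lt v.
Proof.
apply/seteqP; split => u; rewrite /cell_lt /= ltnS; first by move=> ->; rewrite leqnn ltnn.
by move=> [uv /negP]; rewrite -leqNgt => vu; apply/eqP; rewrite eqn_leq uv.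
Qed.

Lemma measurable_cell v : measurable [set u | cell_index u = v].
Proof. by rewrite cellE; apply: measurableD. Qed.

Lemma prob_cell d (T : measurableType d) (P : probability T R) (X : T -> R) v :
  uniform01 P X -> (v <= n)%N ->
  P (X @^-1` [set u | cell_index u = v]) = (e v.+1 - e v)%:E.
Proof.
move=> uX vn; have [mX _] := uX.
have mpre w : measurable (X @^-1` cell_lt w).
  by rewrite -[X @^-1` _]setTI; apply: mX.
rewrite cellE setDE preimage_setI -preimage_setC -setDE measureD //; last first.
  by rewrite (le_lt_trans (probability_le1 P (mpre _))) ?ltry.
rewrite setIidr; last by move=> w; rewrite /cell_lt /= => /ltnW.
by rewrite EFinB -(prob_cell_lt uX (_ : (v.+1 <= n.+1)%N)) -?(prob_cell_lt uX (leqW vn)).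
Qed.

End CellIndex.

Lemma measure_big_setU_fin d (T : measurableType d) (R : realType)
    (mu : {measure set T -> \bar R}) (I : finType) (Q : pred I) (F : I -> set T) :
  (forall i, measurable (F i)) -> trivIset setT F ->
  mu (\big[setU/set0]_(i | Q i) F i) = (\sum_(i | Q i) mu (F i))%E.
Proof.
move=> mF tF; rewrite [in LHS](big_enum_val_cond (A := predT)).
rewrite [in RHS](big_enum_val_cond (A := predT)).
apply: measure_bigsetU_ord => [i|]; [exact: mF|].
move=> i j _ _ Fij; apply: enum_val_inj; exact: tF.
Qed.

Section CountN.
Variables (R : realType) (n : nat) (T : Type) (U : 'I_n -> T -> R).

Lemma countNE t w : countN U t w = (\sum_(j < n) ((U j w <= t)%R : nat))%N.
Proof.
rewrite /countN -sum1_card big_mkcond /=; apply: eq_bigr => j _.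
have -> : (j \in in_set [set i | U i w <= t]) = (U j w <= t) by apply/idP/idP => /asboolP.
by case: (U j w <= t).
Qed.

Lemma countN_le_n t w : (countN U t w <= n)%N.
Proof. by rewrite /countN (leq_trans (max_card _)) ?card_ord. Qed.

Lemma le_countN t t' w : t <= t' -> (countN U t w <= countN U t' w)%N.
Proof.
move=> tt'; rewrite !countNE; apply: leq_sum => j _.
by case: (boolP (U j w <= t)) => // /le_trans ->.
Qed.

End CountN.

Section CrossingEvent.
Variables (d : measure_display) (T : measurableType d) (R : realType) (P : probability T R).
Variables (n : nat) (U : 'I_n -> T -> R) (e : nat -> R) (b : nat -> nat).
Hypotheses (U_indep : mutually_independent P U) (U_unif : forall i, uniform01 P (U i)).
Hypotheses (e_homo : {homo e : i j / (i <= j)%N >-> i <= j}) (e0 : e 0 = 0)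
  (e_last : e n.+1 = 1).

Let ps := increments e 0 n.+1.
Let bs := [seq b i | i <- iota 1 n].

Let cell_index_lt_size u : (cell_index n e u < size ps)%N.
Proof. by rewrite size_increments ltnS cell_index_le_n. Qed.

Definition cell_assignment (w : T) : {ffun 'I_n -> 'I_(size ps)} :=
  [ffun j => Ordinal (cell_index_lt_size (U j w))].

Definition assignment_event (c : {ffun 'I_n -> 'I_(size ps)}) : set T :=
  \bigcap_(j in [set: 'I_n]) (U j @^-1` [set u | cell_index n e u = c j]).

Lemma assignment_eventE c w : assignment_event c w <-> c = cell_assignment w.
Proof.
split=> [cw|-> j _]; last by rewrite /= ffunE.
by apply/ffunP => j; apply/val_inj; rewrite ffunE /= (cw j I).
Qed.

Lemma crossing_cell_assignment w :
  crossing 0 bs (counts (cell_assignment w)) <->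
  exists i : 'I_n, (b i.+1 <= countN U (e i.+1) w)%N.
Proof.
have size_bs : size bs = n by rewrite size_map size_iota.
have prefixE (i : 'I_n) : (\sum_(j < i.+1) nth 0 (counts (cell_assignment w)) j)%N =
    countN U (e i.+1) w.
  rewrite counts_prefix ?size_increments ?ltnS 1?ltnW // countNE.
  by apply: eq_bigr => j _; rewrite ffunE /= cell_index_le.
have size_le : (size bs <= size (counts (cell_assignment w)))%N.
  by rewrite size_bs /counts size_mkseq size_increments.
rewrite -(rwP (crossingP _ size_le)) size_bs.
have nth_bs i : (i < n)%N -> nth 0 bs i = b i.+1.
  by move=> ltin; rewrite (nth_map 0%N) ?size_iota // nth_iota.
split=> [[i ltin]|[i]].
  by rewrite add0n nth_bs // (prefixE (Ordinal ltin)); exists (Ordinal ltin).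
by rewrite -prefixE -nth_bs //; exists i.
Qed.

Lemma crossing_event_bigsetU :
  [set w | exists i : 'I_n, (b i.+1 <= countN U (e i.+1) w)%N] =
  \big[setU/set0]_(c | crossing 0 bs (counts c)) assignment_event c.
Proof.
apply/seteqP; split=> w.
  move=> crossed.
  rewrite -bigcup_seq_cond; exists (cell_assignment w); last exact/assignment_eventE.
  by rewrite /= mem_index_enum; apply/crossing_cell_assignment.
rewrite -bigcup_seq_cond => -[c /= /andP[_ crossed] /assignment_eventE cw].
by apply/crossing_cell_assignment; rewrite -cw.
Qed.

Let measurable_assignment_event c : measurable (assignment_event c).
Proof.
apply: fin_bigcap_measurable => [|j _]; first exact: finite_finset.
have [mU _] := U_unif j; rewrite -[_ @^-1` _]setTI.
exact: mU measurableT _ (measurable_cell n e_homo _).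
Qed.

Lemma measurable_crossing_event :
  measurable [set w | exists i : 'I_n, (b i.+1 <= countN U (e i.+1) w)%N].
Proof. by rewrite crossing_event_bigsetU; apply: bigsetU_measurable. Qed.

Lemma prob_crossing_event :
  P [set w | exists i : 'I_n, (b i.+1 <= countN U (e i.+1) w)%N] =
  (assignment_sum ps n (fun l => (crossing 0 bs l)%:R))%:E.
Proof.
rewrite crossing_event_bigsetU measure_big_setU_fin //; last first.
  by move=> c c' _ _ [w [/assignment_eventE -> /assignment_eventE ->]].
rewrite /assignment_sum -sumEFin big_mkcond /=; apply: eq_bigr => c _.
case: (crossing 0 bs (counts c)); last by rewrite mul0r.
rewrite mul1r /assignment_event U_indep => [|j]; last exact: (measurable_cell n e_homo (c j)).
rewrite -prodEFin; apply: eq_bigr => j _.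
have cjn : (c j <= n)%N by rewrite -ltnS -[n.+1](size_increments e 0) ltn_ord.
rewrite /ps /increments (nth_map 0%N) ?size_iota // nth_iota //.
exact: prob_cell.
Qed.

End CrossingEvent.

Section ScanRatio.
Variables (R : realType) (n : nat) (T : Type) (U : 'I_n -> T -> R) (t0 : R) (w : T).

Definition scan_ratio : set R :=
  [set (countN U t w)%:R / (1 + n%:R * t) | t in `[0, t0]].

Lemma scan_ratio_neq0 : 0 <= t0 -> scan_ratio !=set0.
Proof.
move=> t0_ge0; exists ((countN U 0 w)%:R / (1 + n%:R * 0)), 0 => //=.
by rewrite in_itv /= lexx.
Qed.

Lemma scan_ratio_ub : has_ubound scan_ratio.
Proof.
exists n%:R => _ [t + <-]; rewrite /= in_itv /= => /andP[t_ge0 _].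
have one_le : 1 <= 1 + n%:R * t by rewrite lerDl mulr_ge0.
rewrite ler_pdivrMr ?(lt_le_trans ltr01) //; apply: le_trans (ler_peMr (ler0n _ _) one_le).
by rewrite ler_nat countN_le_n.
Qed.

End ScanRatio.

Section Levels.
Variables (R : realType) (n : nat) (t0 y : R).
Hypotheses (t0_ge0 : 0 <= t0) (t0_le1 : t0 <= 1) (y_gt0 : 0 < y).

(* The ratio [N_t / (1 + n t)] reaches [y] with [N_t = i] at the time where
   [i = y (1 + n t)], clipped to [[0, t0]]; levels [i < y] are out of reach,
   which the count [n.+1] encodes.  The time 1 after the last level makes the
   increments of [level_time] the probabilities of all [n.+1] cells. *)
Definition level_time (i : nat) : R :=
  if (i <= n)%N then Num.max 0 (Num.min t0 ((i%:R / y - 1) / n%:R)) else 1.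

Definition level_count (i : nat) : nat := if y <= i%:R then i else n.+1.

Lemma level_time_ge0 i : 0 <= level_time i.
Proof. by rewrite /level_time; case: ifP; rewrite ?le_max ?lexx. Qed.

Lemma level_time_le_t0 i : (i <= n)%N -> level_time i <= t0.
Proof. by move=> i_le_n; rewrite /level_time i_le_n ge_max t0_ge0 ge_min lexx. Qed.

Lemma level_time0 : level_time 0 = 0.
Proof.
rewrite /level_time leq0n mul0r sub0r; apply/max_idPl.
by rewrite ge_min mulNr oppr_le0 divr_ge0 ?ler0n ?orbT.
Qed.

Lemma level_time_last : level_time n.+1 = 1.
Proof. by rewrite /level_time ltnn. Qed.

Lemma level_time_homo : {homo level_time : i j / (i <= j)%N >-> i <= j}.
Proof.
move=> i j ij; rewrite /level_time.
case: (leqP j n) => [jn|nj]; last first.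
  by case: ifP => // _; rewrite ge_max ler01 ge_min t0_le1.
rewrite (leq_trans ij jn); apply/le_max2/le_min2 => //.
apply: ler_wpM2r; first by rewrite invr_ge0 ler0n.
by rewrite lerD2r; apply: ler_wpM2r; rewrite ?invr_ge0 ?ler_nat // ltW.
Qed.

Lemma level_time_le_ratio i : (0 < i <= n)%N -> y <= i%:R ->
  y * (1 + n%:R * level_time i) <= i%:R.
Proof.
move=> /andP[i_gt0 i_le_n] y_le_i; have n_gt0 : 0 < n%:R :> R.
  by rewrite ltr0n (leq_trans i_gt0).
have a_ge0 : 0 <= (i%:R / y - 1) / n%:R.
  by rewrite divr_ge0 ?ler0n // subr_ge0 ler_pdivlMr // mul1r.
have : level_time i <= (i%:R / y - 1) / n%:R.
  by rewrite /level_time i_le_n ge_max a_ge0 ge_min lexx orbT.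
rewrite ler_pdivlMr // mulrC => le_ns.
by rewrite -ler_pdivlMl // mulrC; lra.
Qed.

Lemma le_level_time t (k : nat) : 0 <= t <= t0 -> (k <= n)%N ->
  y * (1 + n%:R * t) <= k%:R -> t <= level_time k.
Proof.
move=> /andP[t_ge0 t_le_t0] k_le_n le_yk; rewrite /level_time k_le_n le_max le_min t_le_t0 /=.
apply/orP; right.
have n_gt0 : 0 < n%:R :> R.
  rewrite ltr0n (@leq_trans k) // -(ltr0n R); apply: lt_le_trans le_yk.
  by rewrite mulr_gt0 // ltr_pwDl // mulr_ge0.
move: le_yk; rewrite -ler_pdivlMl // mulrC => le_k.
by rewrite ler_pdivlMr //; lra.
Qed.

Lemma level_count_le i N : (level_count i <= N <= n)%N -> y <= i%:R /\ (i <= N)%N.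
Proof.
rewrite /level_count; case: ifP => [y_le_i /andP[]//|_ /andP[lt_nN N_le_n]].
by move: (leq_trans lt_nN N_le_n); rewrite ltnn.
Qed.

Lemma exp_martingale_level_ge1 (gamma x : R) i N : 0 <= gamma -> y <= x ->
  (0 < i <= n)%N -> (level_count i <= N <= n)%N ->
  1 <= exp_martingale n gamma x (gamma * n%:R * (x - y) / y) N (level_time i).
Proof.
move=> gamma_ge0 y_le_x i_range N_range.
have [y_le_i i_le_N] := level_count_le N_range.
have i_le_n : (i <= n)%N by case/andP: i_range.
have N_le_n : (N <= n)%N by case/andP: N_range.
have ratio := level_time_le_ratio i_range y_le_i.
rewrite /exp_martingale -[leLHS]expR0 ler_expR -(pmulr_rge0 _ y_gt0).
have -> : y * (gamma * (N%:R - x * (1 + n%:R * level_time i)) + gamma * n%:R * (x - y) / y) =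
    gamma * (y * N%:R - x * (y * (1 + n%:R * level_time i)) + n%:R * (x - y)).
  by field; rewrite gt_eqF.
apply: mulr_ge0 => //.
have x_ge0 : 0 <= x by rewrite (le_trans (ltW y_gt0)).
have := ler_wpM2l x_ge0 ratio; rewrite -!(ler_nat R) in i_le_N i_le_n.
have : 0 <= (x - y) * (n%:R - i%:R) by rewrite mulr_ge0 // subr_ge0.
have : 0 <= y * (N%:R - i%:R) by rewrite mulr_ge0 ?subr_ge0 // ltW.
lra.
Qed.

Variables (T : Type) (U : 'I_n -> T -> R) (w : T).

Lemma crossing_of_lt_sup : y < sup (scan_ratio U t0 w) ->
  exists i : 'I_n, (level_count i.+1 <= countN U (level_time i.+1) w)%N.
Proof.
move=> /(sup_gt (scan_ratio_neq0 U w t0_ge0)) [_ [t t_in <-]].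
move: (t_in); rewrite /= in_itv /= => /andP[t_ge0 _].
set k := countN U t w => lt_y_ratio.
have one_le : 1 <= 1 + n%:R * t by rewrite lerDl mulr_ge0.
have lt_yk : y * (1 + n%:R * t) < k%:R by rewrite -ltr_pdivlMr ?(lt_le_trans ltr01).
have y_le_k : y <= k%:R.
  by apply: le_trans _ (ltW lt_yk); rewrite ler_peMr ?(ltW y_gt0).
have k_gt0 : (0 < k)%N by rewrite -(ltr0n R) (lt_le_trans y_gt0).
have k_le_n : (k <= n)%N := countN_le_n U t w.
have k_pred_lt : (k.-1 < n)%N by rewrite prednK.
exists (Ordinal k_pred_lt); rewrite /= (prednK k_gt0).
rewrite /level_count y_le_k; apply: le_countN.
exact: le_level_time (ltW lt_yk).
Qed.

Lemma sup_ge_of_crossing :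
  (exists i : 'I_n, (level_count i.+1 <= countN U (level_time i.+1) w)%N) ->
  y <= sup (scan_ratio U t0 w).
Proof.
move=> [i crossed]; set s := level_time i.+1 in crossed.
have [y_le_i i_le_k] : y <= i.+1%:R /\ (i.+1 <= countN U s w)%N.
  by apply: level_count_le; rewrite crossed countN_le_n.
have s_ge0 : 0 <= s := level_time_ge0 i.+1.
have s_le_t0 : s <= t0 := level_time_le_t0 (ltn_ord i).
apply: le_trans (ub_le_sup (scan_ratio_ub U t0 w) _); last first.
  by exists s; rewrite //= in_itv /= s_ge0.
rewrite ler_pdivlMr ?ltr_pwDl ?mulr_ge0 //.
by apply: le_trans (level_time_le_ratio _ y_le_i) _; rewrite ?ler_nat ?ltn_ord.
Qed.

End Levels.

Definition level_crossing_event (R : realType) n T (U : 'I_n -> T -> R) (t0 y : R) : set T :=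
  [set w | exists i : 'I_n, (level_count n y i.+1 <= countN U (level_time n t0 y i.+1) w)%N].

Lemma measurable_level_crossing_event d (T : measurableType d) (R : realType)
    (P : probability T R) n (U : 'I_n -> T -> R) (t0 y : R) :
  (forall i, uniform01 P (U i)) -> t0 <= 1 -> 0 < y ->
  measurable (level_crossing_event U t0 y).
Proof.
move=> U_unif t0_le1 y_gt0.
exact: measurable_crossing_event U_unif (level_time_homo n t0_le1 y_gt0).
Qed.

Lemma prob_level_crossing_le d (T : measurableType d) (R : realType) (P : probability T R)
    n (U : 'I_n -> T -> R) (gamma x y : R) :
  let t0 := (Num.sqrt n%:R)^-1 in
  (0 < n)%N -> mutually_independent P U -> (forall i, uniform01 P (U i)) ->
  0 <= gamma -> expR gamma = 1 + gamma * x -> 0 < y <= x ->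
  (P (level_crossing_event U t0 y) <= (expR (t0 + 2^-1 * n%:R^-1) *
     expR (- (gamma * x) + gamma * n%:R * (x - y) / y))%:E)%E.
Proof.
move=> t0 n_gt0 U_indep U_unif gamma_ge0 gamma_eq /andP[y_gt0 y_le_x].
have t0_ge0 : 0 <= t0 by rewrite invr_ge0 sqrtr_ge0.
have t0_le1 : t0 <= 1 := invr_sqrt_nat_le1 R n_gt0.
have e_homo := level_time_homo n t0_le1 y_gt0.
rewrite /level_crossing_event (prob_crossing_event (level_count n y) U_indep U_unif e_homo
  (level_time0 n t0 y) (level_time_last n t0 y)) lee_fin assignment_sumE.
have := crossing_sum_le gamma_eq (expR_ge0 _) (level_time_ge0 n t0 y)
  (level_time_le_t0 y t0_ge0) e_homo (level_time_last n t0 y)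
  (fun N r => @binomial_le_poisson_weight R n N r n_gt0)
  (fun i N => exp_martingale_level_ge1 t0 y_gt0 gamma_ge0 y_le_x)
  (add0n n) (leq0n n).
rewrite subn0 level_time0 /poisson_weight /exp_martingale expr0 ffactn0 divr1 mulr0.
by rewrite oppr0 expR0 !mulr1 addr0 !mulr1 sub0r mulrN.
Qed.

Lemma le_of_forall_sub_le (R : realType) (x s c : R) :
  (forall m : nat, x - c / m.+1%:R <= s) -> x <= s.
Proof.
move=> le_xs; apply/ler_addgt0Pr => e e_gt0.
have [m lt_m] : exists m : nat, `|c| / e < m%:R.
  by eexists; apply: archi_boundP; rewrite divr_ge0 // ltW.
have lt_ce : c / m.+1%:R < e.
  apply: le_lt_trans (ler_wpM2r _ (ler_norm c)) _; first by rewrite invr_ge0.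
  rewrite ltr_pdivrMr // mulrC -ltr_pdivrMr //; apply: lt_trans lt_m _.
  by rewrite ltr_nat.
by rewrite -[x](subrK (c / m.+1%:R)) lerD // ltW.
Qed.

Lemma le_of_forall_le_expR (R : realType) (p : \bar R) (B : R) : 0 <= B ->
  (forall delta : R, 0 < delta -> (p <= (B * expR delta)%:E)%E) -> (p <= B%:E)%E.
Proof.
move=> B_ge0 le_p; apply/lee_addgt0Pr => e e_gt0.
have q_gt1 : 1 < 1 + e / (B + 1) by rewrite ltrDl divr_gt0 // ltr_wpDl.
apply: le_trans (le_p _ (ln_gt0 q_gt1)) _.
rewrite lnK ?posrE ?(lt_trans ltr01) // lee_fin mulrDr mulr1 lerD2l mulrCA.
by rewrite ger_pMr ?ler_pdivrMr ?mul1r ?lerDl ?ltr_wpDl.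
Qed.

Lemma exists_gap_le (R : realType) (c x delta : R) : 0 <= c -> 1 < x -> 0 < delta ->
  exists2 y, 1 < y < x & c * (x - y) / y <= delta.
Proof.
move=> c_ge0 x_gt1 delta_gt0; pose h : R := Num.min ((x - 1) / 2) (delta / (c + 1)).
have h_gt0 : 0 < h by rewrite lt_min !divr_gt0 ?subr_gt0 ?ltr_wpDl.
have h_le1 : h <= (x - 1) / 2 by rewrite ge_min lexx.
have h_le2 : h * (c + 1) <= delta by rewrite -ler_pdivlMr ?ltr_wpDl // ge_min lexx orbT.
exists (x - h); first by apply/andP; split; lra.
rewrite ler_pdivrMr; last by lra.
have -> : x - (x - h) = h by ring.
have le_delta : delta <= delta * (x - h) by rewrite ler_peMr ?(ltW delta_gt0) //; lra.
have : c * h <= h * (c + 1) by rewrite mulrDr mulr1 mulrC lerDl ltW.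
lra.
Qed.

Lemma sub_div_natS_itv (R : realFieldType) (m : nat) (x : R) :
  1 < x -> 0 < x - (x - 1) / m.+1%:R < x.
Proof.
move=> x_gt1; have q_gt0 : 0 < (x - 1) / m.+1%:R by rewrite divr_gt0 ?subr_gt0.
have q_le : (x - 1) / m.+1%:R <= x - 1.
  by rewrite ler_pdivrMr // ler_peMr ?ler1n // subr_ge0 ltW.
by move: q_gt0 q_le; set q := _ / _ => q_gt0 q_le; apply/andP; split; lra.
Qed.

Section ScanEvent.
Variables (R : realType) (n : nat) (T : Type) (U : 'I_n -> T -> R) (t0 x : R).
Hypotheses (t0_ge0 : 0 <= t0) (t0_le1 : t0 <= 1) (x_gt1 : 1 < x).

Lemma scan_event_sub_crossing y : 0 < y < x ->
  [set w | x <= sup (scan_ratio U t0 w)] `<=` level_crossing_event U t0 y.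
Proof.
move=> /andP[y_gt0 y_lt_x] w x_le_sup.
by apply: crossing_of_lt_sup => //; apply: lt_le_trans x_le_sup.
Qed.

Lemma scan_event_bigcap :
  [set w | x <= sup (scan_ratio U t0 w)] =
  \bigcap_(m : nat) level_crossing_event U t0 (x - (x - 1) / m.+1%:R).
Proof.
apply/seteqP; split=> w.
  by move=> x_le_sup m _; apply: scan_event_sub_crossing; rewrite ?sub_div_natS_itv.
move=> crossed; apply: (@le_of_forall_sub_le _ _ _ (x - 1)) => m.
have /andP[y_gt0 _] := sub_div_natS_itv m x_gt1.
by apply: sup_ge_of_crossing => //; apply: crossed.
Qed.

End ScanEvent.

Theorem lemmaC2 (R : realType) (d : measure_display) (T : measurableType d)
  (P : probability T R) (n : nat) (U : 'I_n -> T -> R)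
  (x gamma : R) :
  (1 <= n)%N ->
  mutually_independent P U ->
  (forall i, uniform01 P (U i)) ->
  1 < x ->
  0 < gamma -> expR gamma = 1 + gamma * x ->
  (P [set w | (x <= sup [set (countN U t w)%:R / (1 + n%:R * t) |
                        t in `[0, (Num.sqrt n%:R)^-1]])%R] <=
  (expR ((Num.sqrt n%:R)^-1 + 2^-1 * n%:R^-1) * expR (- (gamma * x)))%:E)%E.
Proof.
move=> n_gt0 U_indep U_unif x_gt1 gamma_gt0 gamma_eq.
set t0 := (Num.sqrt n%:R)^-1; set B := expR (t0 + 2^-1 * n%:R^-1) * expR (- (gamma * x)).
have t0_ge0 : 0 <= t0 by rewrite invr_ge0 sqrtr_ge0.
have t0_le1 : t0 <= 1 := invr_sqrt_nat_le1 R n_gt0.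
change (P [set w | (x <= sup (scan_ratio U t0 w))%R] <= B%:E)%E.
have mE : measurable [set w | (x <= sup (scan_ratio U t0 w))%R].
  rewrite scan_event_bigcap //; apply: bigcapT_measurable => m.
  have /andP[y_gt0 _] := sub_div_natS_itv m x_gt1.
  exact: measurable_level_crossing_event U_unif t0_le1 y_gt0.
apply: le_of_forall_le_expR => [|delta delta_gt0]; first by rewrite mulr_ge0 ?expR_ge0.
have [y /andP[y_gt1 y_lt_x] gap] :=
  exists_gap_le (mulr_ge0 (ltW gamma_gt0) (ler0n R n)) x_gt1 delta_gt0.
have y_gt0 : 0 < y := lt_trans ltr01 y_gt1.
have y_range : 0 < y <= x by rewrite y_gt0 ltW.
have PEy := prob_level_crossing_le n_gt0 U_indep U_unif (ltW gamma_gt0) gamma_eq y_range.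
have E_le : (P [set w | (x <= sup (scan_ratio U t0 w))%R] <=
             P (level_crossing_event U t0 y))%E.
  apply: le_measure; rewrite ?inE //.
    exact: measurable_level_crossing_event U_unif t0_le1 y_gt0.
  by apply: scan_event_sub_crossing; rewrite // y_gt0.
apply: le_trans (le_trans E_le PEy) _.
rewrite lee_fin /B -[X in _ <= X]mulrA; apply: ler_wpM2l; first exact: expR_ge0.
by rewrite -expRD ler_expR lerD2l.
Qed.
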